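(* Let $P=u_1;\ldots;u_k$ be a PGLD program and let $\langle\sigma,\alpha\rangle$ be the molecular dynamics state reached from $t_{\mathrm{init}}$ by executing $\mathrm{pgldmd}(P)$ (applying $\mathrm{eff}$ for its methods in order); write $t=\langle\sigma,\alpha\rangle$. Then $\mathrm{yld}(\mathsf{equal}(s,s_1),t)=T$ and for all $j,l\in[1,k]$, $f\in\mathrm{Foci}$, $m\in\mathrm{Meth}$: (i) $u_j=f.m$ iff $\mathrm{yld}(\mathsf{getfield}(u,s_j,\mathsf{focus}),t)=T$, $\mathrm{yld}(\mathsf{equal}(u,f),\mathrm{eff}(\mathsf{getfield}(u,s_j,\mathsf{focus}),t))=T$, $\mathrm{yld}(\mathsf{getfield}(v,s_j,\mathsf{method}),t)=T$, $\mathrm{yld}(\mathsf{equal}(v,m),\mathrm{eff}(\mathsf{getfield}(v,s_j,\mathsf{method}),t))=T$, $\mathrm{yld}(\mathsf{getfield}(s,s_j,\mathsf{pos}),t)=T$, $\mathrm{yld}(\mathsf{equal}(s,s_{j+1}),\mathrm{eff}(\mathsf{getfield}(s,s_j,\mathsf{pos}),t))=T$, $\mathrm{yld}(\mathsf{getfield}(s,s_j,\mathsf{neg}),t)=T$, $\mathrm{yld}(\mathsf{equal}(s,s_{j+1}),\mathrm{eff}(\mathsf{getfield}(s,s_j,\mathsf{neg}),t))=T$; (ii) $u_j=+f.m$ iff the same eight conditions hold except that the last one has $s_{j+2}$ in place of $s_{j+1}$; (iii) $u_j=-f.m$ iff the same eight conditions hold except that the sixth one has $s_{j+2}$ in place of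 $s_{j+1}$; (iv) $u_j=\#\#l$ iff $\mathrm{yld}(\mathsf{getfield}(s,s_j,\mathsf{ajmp}),t)=T$ and $\mathrm{yld}(\mathsf{equal}(s,s_l),\mathrm{eff}(\mathsf{getfield}(s,s_j,\mathsf{ajmp}),t))=T$; (v) $u_j=\#\#l'$ for some $l'\notin[1,k]$ iff $\mathrm{yld}(\mathsf{hasfield}(s_j,\mathsf{stop}),t)=T$.
   Context: PGLD. A PGLD program $u_1;\ldots;u_k$ ($k\ge1$) is a sequence of instructions: basic instructions $f.m$, positive tests $+f.m$, negative tests $-f.m$ ($f\in\mathrm{Foci}$, $m\in\mathrm{Meth}$), and absolute jumps $\#\#l$ ($l\in\mathbb N$). Molecular dynamics. Fix a finite set $\mathrm{Spot}$ of spots; finite disjoint sets $\mathrm{Foci}$, $\mathrm{Meth}$ with $\mathrm{Foci},\mathrm{Meth}\subseteq\mathrm{Spot}$; a finite set $\mathrm{Field}$ containing distinct fields $\mathsf{stop},\mathsf{ajmp},\mathsf{focus},\mathsf{method},\mathsf{pos},\mathsf{neg}$; an infinite countable set $\mathrm{PAtom}$ of proto-atoms, $\bot\notin\mathrm{PAtom}$, with a bijection $\mathrm{proatom}:\mathbb N_{\ge1}\to\mathrm{PAtom}$. A state is a pair $\langle\sigma,\alpha\rangle$ with $\sigma:\mathrm{Spot}\to\mathrm{PAtom}\cup\{\bot\}$, $\alpha$ a map from a finite set $\mathrm{dom}(\alpha)\subseteq\mathrm{PAtom}$ (the atoms) assigning to each atom $a$ a map $\alpha(a)$ from a finite set of fields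 to $\mathrm{PAtom}\cup\{\bot\}$, all values of $\sigma$ and each $\alpha(a)$ lying in $\mathrm{dom}(\alpha)\cup\{\bot\}$. $t_{\mathrm{init}}$ is the state with $\mathrm{dom}(\alpha)=\emptyset$. For a method $m$ and state $t$, $\mathrm{eff}(m,t)$ is the new state and $\mathrm{yld}(m,t)\in\{T,F\}$ the reply; unless stated the state is unchanged (''$v$ is a field of $s$'' means $\sigma(s)\ne\bot$ and $v\in\mathrm{dom}(\alpha(\sigma(s)))$): $\mathsf{create}(s)$: with $a=\mathrm{proatom}(n+1)$, $n=\max\{n':\mathrm{proatom}(n')\in\mathrm{dom}(\alpha)\}$ ($\max\emptyset=0$), set $\sigma(s):=a$ and add atom $a$ with no fields; $T$. $\mathsf{setspot}(s,s')$: $\sigma(s):=\sigma(s')$; $T$. $\mathsf{equal}(s,s')$: $T$ iff $\sigma(s)=\sigma(s')$, else $F$. $\mathsf{addfield}(s,v)$: if $\sigma(s)\ne\bot$ and $v$ is not a field of $s$, add field $v$ with content $\bot$ to atom $\sigma(s)$, $T$; else $F$. $\mathsf{hasfield}(s,v)$: $T$ iff $v$ is a field of $s$, else $F$. $\mathsf{setfield}(s,v,s')$: if $v$ is a field of $s$, set $\alpha(\sigma(s))(v):=\sigma(s')$, $T$; else $F$. $\mathsf{getfield}(s,s',v)$: if $v$ is a field of $s'$, set $\sigma(s):=\alpha(\sigma(s'))(v)$, $T$; else $F$. Representation. Fix pairwise distinct spots $s,u,v,s_1,\ldots,s_{k+2}\in\mathrm{Spot}\setminus(\mathrm{Foci}\cup\mathrm{Meth})$.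 For $P=u_1;\ldots;u_k$ with distinct occurring foci $f_1,\ldots,f_n$ and distinct occurring methods $m_1,\ldots,m_{n'}$, $\mathrm{pgldmd}(P)$ is the sequence of methods $\mathsf{create}(f_1);\ldots;\mathsf{create}(f_n);\mathsf{create}(m_1);\ldots;\mathsf{create}(m_{n'});\mathsf{create}(s_1);\ldots;\mathsf{create}(s_{k+2});\rho_1(u_1);\ldots;\rho_k(u_k);\mathsf{addfield}(s_{k+1},\mathsf{stop});\mathsf{addfield}(s_{k+2},\mathsf{stop});\mathsf{setspot}(s,s_1)$ (followed by termination), where for $u_j\in\{f.m,+f.m,-f.m\}$, $\rho_j(u_j)=\mathsf{addfield}(s_j,\mathsf{focus});\mathsf{addfield}(s_j,\mathsf{method});\mathsf{addfield}(s_j,\mathsf{pos});\mathsf{addfield}(s_j,\mathsf{neg});\mathsf{setfield}(s_j,\mathsf{focus},f);\mathsf{setfield}(s_j,\mathsf{method},m);\mathsf{setfield}(s_j,\mathsf{pos},s_p);\mathsf{setfield}(s_j,\mathsf{neg},s_q)$ with $(p,q)=(j+1,j+1)$ for $f.m$, $(j+1,j+2)$ for $+f.m$, $(j+2,j+1)$ for $-f.m$; $\rho_j(\#\#l)=\mathsf{addfield}(s_j,\mathsf{ajmp});\mathsf{setfield}(s_j,\mathsf{ajmp},s_l)$ if $1\le l\le k$, and $\rho_j(\#\#l)=\mathsf{addfield}(s_j,\mathsf{stop})$ otherwise. *)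

From mathcomp Require Import all_boot.
Set Implicit Arguments. Unset Strict Implicit. Unset Printing Implicit Defensive.

Section MD.
Variables (Spot Field : finType) (PAtom : eqType).
(* proatom : N_{>=1} -> PAtom bijection, proinv its inverse *)
Variables (proatom : nat -> PAtom) (proinv : PAtom -> nat).

(* A state <sigma, alpha>.  [None] plays the role of bottom.
   [adom] lists dom(alpha); [alpha a v = None] means v is not a field of a,
   [alpha a v = Some c] means v is a field of a with content c. *)
Record state := State {
  sigma : Spot -> option PAtom;
  adom  : seq PAtom;
  alpha : PAtom -> Field -> option (option PAtom) }.

Inductive method :=
| Create   of Spot
| Setspot  of Spot & Spot
| Equal    of Spot & Spot
| Addfield of Spot & Field
| Hasfield of Spot & Field
| Setfield of Spot & Field & Spot
| Getfield of Spot & Spot & Field.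

Definition t_init : state := State (fun _ => None) [::] (fun _ _ => None).

Definition upd_sigma (t : state) (x : Spot) (c : option PAtom) : Spot -> option PAtom :=
  fun y => if y == x then c else sigma t y.

Definition is_field (t : state) (x : Spot) (v : Field) : bool :=
  if sigma t x is Some a then (a \in adom t) && (alpha t a v != None) else false.

Definition field_content (t : state) (x : Spot) (v : Field) : option PAtom :=
  if sigma t x is Some a then (if alpha t a v is Some c then c else None) else None.

Definition eff (m : method) (t : state) : state :=
  match m with
  | Create x =>
      let n := \max_(a <- adom t) proinv a in
      let a := proatom n.+1 in
      State (upd_sigma t x (Some a)) (a :: adom t)
            (fun b => if b == a then (fun _ => None) else alpha t b)
  | Setspot x y => State (upd_sigma t x (sigma t y)) (adom t) (alpha t)
  | Equal _ _ => t
  | Addfield x v =>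
      match sigma t x with
      | Some a => if ~~ is_field t x v then
                    State (sigma t) (adom t)
                      (fun b w => if (b == a) && (w == v) then Some None else alpha t b w)
                  else t
      | None => t
      end
  | Hasfield _ _ => t
  | Setfield x v y =>
      match sigma t x with
      | Some a => if is_field t x v then
                    State (sigma t) (adom t)
                      (fun b w => if (b == a) && (w == v) then Some (sigma t y) else alpha t b w)
                  else t
      | None => t
      end
  | Getfield x y v =>
      if is_field t y v then State (upd_sigma t x (field_content t y v)) (adom t) (alpha t)
      else t
  end.

(* replies: true = T, false = F *)
Definition yld (m : method) (t : state) : bool :=
  match m with
  | Create _ | Setspot _ _ => true
  | Equal x y => sigma t x == sigma t y
  | Addfield x v => (sigma t x != None) && ~~ is_field t x v
  | Hasfield x v | Setfield x v _ | Getfield _ x v => is_field t x v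
  end.

Definition run (ms : seq method) : state := foldl (fun t m => eff m t) t_init ms.

(* PGLD instructions; foci and methods are spots *)
Inductive instr :=
| Basic of Spot & Spot
| PTest of Spot & Spot
| NTest of Spot & Spot
| AJmp of nat.

Definition focus_of (u : instr) : option Spot :=
  match u with Basic f _ | PTest f _ | NTest f _ => Some f | AJmp _ => None end.
Definition meth_of (u : instr) : option Spot :=
  match u with Basic _ m | PTest _ m | NTest _ m => Some m | AJmp _ => None end.

Definition foci_of (P : seq instr) : seq Spot := undup (pmap focus_of P).
Definition meths_of (P : seq instr) : seq Spot := undup (pmap meth_of P).

Variables (fstop fajmp ffocus fmethod fpos fneg : Field).
Variables (s : Spot) (sj : nat -> Spot).

Definition rho_body (j : nat) (f m : Spot) (p q : nat) : seq method :=
  [:: Addfield (sj j) ffocus; Addfield (sj j) fmethod; Addfield (sj j) fpos;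
      Addfield (sj j) fneg; Setfield (sj j) ffocus f; Setfield (sj j) fmethod m;
      Setfield (sj j) fpos (sj p); Setfield (sj j) fneg (sj q)].

Definition rho (k j : nat) (u : instr) : seq method :=
  match u with
  | Basic f m => rho_body j f m j.+1 j.+1
  | PTest f m => rho_body j f m j.+1 j.+2
  | NTest f m => rho_body j f m j.+2 j.+1
  | AJmp l => if (1 <= l <= k) then [:: Addfield (sj j) fajmp; Setfield (sj j) fajmp (sj l)]
              else [:: Addfield (sj j) fstop]
  end.

Definition pgldmd (P : seq instr) : seq method :=
  let k := size P in
  [seq Create f | f <- foci_of P] ++ [seq Create m | m <- meths_of P]
  ++ [seq Create (sj i) | i <- iota 1 (k + 2)]
  ++ flatten [seq rho k p.1 p.2 | p <- zip (iota 1 k) P]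
  ++ [:: Addfield (sj k.+1) fstop; Addfield (sj k.+2) fstop; Setspot s (sj 1)].

End MD.

Arguments Create {Spot Field} _.
Arguments Setspot {Spot Field} _ _.
Arguments Equal {Spot Field} _ _.
Arguments AJmp {Spot} _.

From mathcomp Require Import all_boot zify.
Set Implicit Arguments. Unset Strict Implicit. Unset Printing Implicit Defensive.

(* The creation phase gives every spot of the program (its foci, its methods and
   s_1, ..., s_(k+2)) a fresh atom of its own, and no atom has fields yet.  The
   field-setting phase then only writes to atoms of the spots s_i, the instructions
   rho_i writing to the atom of s_i alone, so the atom of s_j ends up carrying exactly
   the fields that encode u_j; the final setspot only moves s.  A getfield followed by
   an equal test compares the atom stored in a field with the atom of a spot, and as
   distinct spots hold distinct atoms these readouts determine u_j. *)

Lemma zip_iota (T : Type) (x0 : T) n (r : seq T) :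
  zip (iota n (size r)) r = [seq (i, nth x0 r (i - n)) | i <- iota n (size r)].
Proof.
elim: r n => //= x r IH n; rewrite subnn IH; congr (_ :: _).
apply/eq_in_map => i; rewrite mem_iota => /andP[ni _].
by rewrite [i - n](_ : _ = (i - n.+1).+1) // subnS prednK // subn_gt0.
Qed.

Lemma iota_split_at j k : 0 < j <= k -> iota 1 k = iota 1 j.-1 ++ j :: iota j.+1 (k - j).
Proof.
move=> jk; rewrite {1}(_ : k = j.-1 + (k - j).+1); last by lia.
by rewrite iotaD add1n prednK //; case/andP: jk.
Qed.

Lemma mem_pmap_nth (T : Type) (rT : eqType) (g : T -> option rT) x0 (r : seq T) j y :
  j < size r -> g (nth x0 r j) = Some y -> y \in pmap g r.
Proof.
move=> jr gy; rewrite -(cat_take_drop j r) (drop_nth x0 jr) pmap_cat /= gy.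
by rewrite mem_cat mem_head orbT.
Qed.

Lemma and_pairs_iff (P1 Q1 P2 Q2 P3 Q3 P4 Q4 A1 A2 A3 A4 : Prop) :
    (P1 /\ Q1 <-> A1) -> (P2 /\ Q2 <-> A2) -> (P3 /\ Q3 <-> A3) -> (P4 /\ Q4 <-> A4) ->
  P1 /\ Q1 /\ P2 /\ Q2 /\ P3 /\ Q3 /\ P4 /\ Q4 <-> [/\ A1, A2, A3 & A4].
Proof.
move=> e1 e2 e3 e4; split=> [[p1 [q1 [p2 [q2 [p3 [q3 [p4 q4]]]]]]]|].
  by split; [apply/e1|apply/e2|apply/e3|apply/e4].
by case=> /e1[? ?] /e2[? ?] /e3[? ?] /e4[? ?].
Qed.

Section Machine.
Variables (Spot Field : finType) (PAtom : eqType).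
Variables (proatom : nat -> PAtom) (proinv : PAtom -> nat).
Hypothesis proatomK : forall n, 0 < n -> proinv (proatom n) = n.

Local Notation state := (state Spot Field PAtom).
Local Notation method := (method Spot Field).
Local Notation E := (@eff Spot Field PAtom proatom proinv).
Local Notation Y := (@yld Spot Field PAtom).

Definition exec (t : state) (ms : seq method) : state := foldl (fun t m => E m t) t ms.

Lemma exec_cat t ms1 ms2 : exec t (ms1 ++ ms2) = exec (exec t ms1) ms2.
Proof. exact: foldl_cat. Qed.

Definition allocated (L : seq Spot) (t : state) :=
  [/\ {in L, forall x, exists2 a, sigma t x = Some a & a \in adom t},
      {in L &, injective (sigma t)} &
      forall x, x \notin L -> sigma t x = None].

Definition blank (t : state) := forall a w, alpha t a w = None.

Lemma eq_allocated L1 L2 t : L1 =i L2 -> allocated L1 t -> allocated L2 t.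
Proof.
move=> eqL [alloc inj out]; split=> [x|x y|x]; rewrite -?eqL; [exact: alloc|exact: inj|exact: out].
Qed.

Lemma allocated_inj L t : allocated L t -> {in L, forall x y, sigma t x = sigma t y -> x = y}.
Proof.
case=> alloc inj out x xL y; have [yL|yL] := boolP (y \in L); first exact: inj.
by have [a -> _] := alloc x xL; rewrite out.
Qed.

(* The new atom is fresh because its [proinv] exceeds that of every existing atom. *)
Lemma eff_create t x : exists2 a, a \notin adom t &
  E (Create x) t = State (upd_sigma t x (Some a)) (a :: adom t)
                         (fun b => if b == a then fun _ => None else alpha t b).
Proof.
exists (proatom (\max_(a <- adom t) proinv a).+1) => //.
apply/negP => /(@leq_bigmax_seq _ _ xpredT proinv) /(_ erefl).
by rewrite proatomK // ltnn.
Qed.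

Lemma allocated_create L t x : x \notin L -> allocated L t -> blank t ->
  allocated (x :: L) (E (Create x) t) /\ blank (E (Create x) t).
Proof.
move=> xL [alloc inj out] blk; have [a fresh ->] := eff_create t x.
split; first split=> [y|y z|y] /=; rewrite /upd_sigma ?inE.
- case: eqP => [_ _|_ /= /alloc [b -> bt]]; first by exists a; rewrite ?inE ?eqxx.
  by exists b; rewrite // inE bt orbT.
- case: (y =P x) => [->|_]; case: (z =P x) => [->|_] //= yL zL.
  + by have [b -> bt [ab]] := alloc z zL; move: fresh; rewrite ab bt.
  + by have [b -> bt [ab]] := alloc y yL; move: fresh; rewrite -ab bt.
  + exact: inj.
- by rewrite negb_or => /andP[/negbTE -> /out].
- by move=> b w /=; case: ifP.
Qed.

Lemma allocated_creates l L t : uniq (l ++ L) -> allocated L t -> blank t ->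
  allocated (l ++ L) (exec t [seq Create x | x <- l]) /\
  blank (exec t [seq Create x | x <- l]).
Proof.
elim: l L t => [|x l IH] L t //= /andP[xlL ulL] alloc blk.
rewrite mem_cat negb_or in xlL; case/andP: xlL => xl xL.
have [alloc' blk'] := allocated_create xL alloc blk.
have perm_x : perm_eq (l ++ x :: L) (x :: l ++ L) by rewrite -[x :: L]cat1s perm_catCA.
have [|allocl blkl] := IH (x :: L) _ _ alloc' blk'.
  by rewrite (perm_uniq perm_x) /= mem_cat negb_or xl xL.
by split=> //; exact: eq_allocated (perm_mem perm_x) allocl.
Qed.

Definition field_spot (m : method) : option Spot :=
  match m with Addfield x _ | Setfield x _ _ => Some x | _ => None end.

Lemma eff_field_method m x t : field_spot m = Some x ->
  [/\ sigma (E m t) = sigma t, adom (E m t) = adom t &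
      forall a w, sigma t x != Some a -> alpha (E m t) a w = alpha t a w].
Proof.
case: m => //= [y v|y v z] [<-]; case: (sigma t y) => [b|] //=; case: ifP => //= _;
  by split=> // a w ba; case: eqP => //= ab; rewrite ab eqxx in ba.
Qed.

Definition writes_in (X : pred Spot) (m : method) : bool :=
  if field_spot m is Some x then X x else false.

Lemma sub_writes_in (X1 X2 : pred Spot) : subpred X1 X2 -> subpred (writes_in X1) (writes_in X2).
Proof. by move=> sX m; rewrite /writes_in; case: (field_spot m) => // x /sX. Qed.

Lemma all_writes_inT (X : pred Spot) ms : all (writes_in X) ms -> all (writes_in predT) ms.
Proof. by apply: sub_all; apply: sub_writes_in. Qed.

Lemma exec_writes_sigma_adom t ms : all (writes_in predT) ms ->
  sigma (exec t ms) = sigma t /\ adom (exec t ms) = adom t.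
Proof.
elim: ms t => //= m ms IH t /andP[]; rewrite /writes_in.
case fm: (field_spot m) => [x|] // _ fms.
have [sig_m adom_m _] := eff_field_method t fm.
by rewrite -sig_m -adom_m; apply: IH.
Qed.

Lemma allocated_exec_writes L t ms : all (writes_in predT) ms ->
  allocated L t -> allocated L (exec t ms).
Proof. by move=> /(exec_writes_sigma_adom t) [sig_ms adom_ms]; rewrite /allocated sig_ms adom_ms. Qed.

Lemma exec_writes_frame t ms a w :
    all (writes_in [pred x | sigma t x != Some a]) ms ->
  alpha (exec t ms) a w = alpha t a w.
Proof.
elim: ms t => //= m ms IH t /andP[]; rewrite {1}/writes_in.
case fm: (field_spot m) => [x|] // xa fms.
have [sig_m _ alpha_m] := eff_field_method t fm.
by rewrite IH -?alpha_m // sig_m.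
Qed.

Lemma exec_writes_frame_allocated L t a x0 (X : seq Spot) ms w :
    allocated L t -> x0 \in L -> sigma t x0 = Some a -> x0 \notin X ->
    all (writes_in (mem X)) ms ->
  alpha (exec t ms) a w = alpha t a w.
Proof.
move=> alloc x0L x0a x0X wms; apply: exec_writes_frame.
apply: sub_all wms; apply: sub_writes_in => x xX /=; rewrite -x0a.
by apply: contraNneq x0X => /esym/(allocated_inj alloc x0L) ->.
Qed.

Lemma eff_addfield_new sig ad al x v a : sig x = Some a -> al a v = None ->
  E (Addfield x v) (State sig ad al) =
  State sig ad (fun b w => if (b == a) && (w == v) then Some None else al b w).
Proof. by move=> xa av; rewrite /= /is_field /= xa av andbF. Qed.

Lemma eff_setfield_old sig ad al x v y a : sig x = Some a -> a \in ad -> al a v != None ->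
  E (Setfield x v y) (State sig ad al) =
  State sig ad (fun b w => if (b == a) && (w == v) then Some (sig y) else al b w).
Proof. by move=> xa aad av; rewrite /= /is_field /= xa aad av. Qed.

Lemma getfield_equal_iff t x y z w a : x != y -> sigma t z = Some a -> a \in adom t ->
  Y (Getfield x z w) t /\ Y (Equal x y) (E (Getfield x z w) t) <-> alpha t a w = Some (sigma t y).
Proof.
move=> xy za aad; rewrite /= /is_field /field_content za aad /=.
case: (alpha t a w) => [c|] /=; last by split=> // -[].
rewrite /upd_sigma eqxx [y == x]eq_sym (negbTE xy).
by split=> [[_ /eqP ->]|[->]].
Qed.

Lemma hasfield_fieldE t z w a : sigma t z = Some a -> a \in adom t ->
  Y (Hasfield z w) t = (alpha t a w != None).
Proof. by move=> za aad; rewrite /= /is_field za aad. Qed.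

Lemma sigma_setspot t x0 y0 z : x0 != z -> sigma (E (Setspot x0 y0) t) z = sigma t z.
Proof. by rewrite /= /upd_sigma eq_sym => /negbTE ->. Qed.

Lemma getfield_equal_setspot_iff t x0 y0 x y z w a :
    x0 != z -> x0 != y -> x != y -> sigma t z = Some a -> a \in adom t ->
  let t1 := E (Setspot x0 y0) t in
  Y (Getfield x z w) t1 /\ Y (Equal x y) (E (Getfield x z w) t1) <-> alpha t a w = Some (sigma t y).
Proof.
move=> x0z x0y xy za aad /=; rewrite -(sigma_setspot t y0 x0y).
by apply: getfield_equal_iff; rewrite ?sigma_setspot.
Qed.

Lemma hasfield_setspotE t x0 y0 z w a : x0 != z -> sigma t z = Some a -> a \in adom t ->
  Y (Hasfield z w) (E (Setspot x0 y0) t) = (alpha t a w != None).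
Proof. by move=> x0z za aad; apply: hasfield_fieldE; rewrite ?sigma_setspot. Qed.

Section Representation.
Variable sj : nat -> Spot.

Definition pgld_spots (P : seq (instr Spot)) : seq Spot :=
  foci_of P ++ meths_of P ++ [seq sj i | i <- iota 1 (size P + 2)].

Lemma sj_in_pgld_spots P i : 0 < i <= size P + 2 -> sj i \in pgld_spots P.
Proof. by move=> ik; rewrite /pgld_spots !mem_cat map_f ?orbT // mem_iota; lia. Qed.

Lemma focus_in_pgld_spots P j x :
  j < size P -> focus_of (nth (AJmp 0) P j) = Some x -> x \in pgld_spots P.
Proof.
by move=> jP fx; rewrite /pgld_spots mem_cat mem_undup (mem_pmap_nth jP fx).
Qed.

Lemma meth_in_pgld_spots P j x :
  j < size P -> meth_of (nth (AJmp 0) P j) = Some x -> x \in pgld_spots P.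
Proof.
by move=> jP mx; rewrite /pgld_spots !mem_cat [x \in meths_of P]mem_undup (mem_pmap_nth jP mx) orbT.
Qed.

Lemma uniq_pgld_spots (Foci Meth : {set Spot}) P :
    [disjoint Foci & Meth] -> {subset foci_of P <= Foci} -> {subset meths_of P <= Meth} ->
    (forall i i', 0 < i <= size P + 2 -> 0 < i' <= size P + 2 -> sj i = sj i' -> i = i') ->
    {in [seq sj i | i <- iota 1 (size P + 2)], forall x, x \notin Foci :|: Meth} ->
  uniq (pgld_spots P).
Proof.
move=> FM PF PM sj_inj sjFM.
have uF : uniq (foci_of P) := undup_uniq _; have uM : uniq (meths_of P) := undup_uniq _.
rewrite /pgld_spots !cat_uniq uF uM map_inj_in_uniq ?iota_uniq; last first.
  by move=> i i'; rewrite !mem_iota => ik i'k; apply: sj_inj; lia.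
rewrite has_cat negb_or /= andbT -andbA; apply/and3P; split; apply/hasPn => x xX; apply/negP.
- by move=> /PF xF; move: (PM _ xX); rewrite (disjointFr FM xF).
- by move=> /PF xF; move: (sjFM _ xX); rewrite in_setU xF.
- by move=> /PM xM; move: (sjFM _ xX); rewrite in_setU xM orbT.
Qed.

Definition test_data (j : nat) (u : instr Spot) : option (Spot * Spot * nat * nat) :=
  match u with
  | Basic f m => Some (f, m, j.+1, j.+1)
  | PTest f m => Some (f, m, j.+1, j.+2)
  | NTest f m => Some (f, m, j.+2, j.+1)
  | AJmp _ => None
  end.

Lemma test_dataK j u u' c : test_data j u' = Some c -> (u = u' <-> test_data j u = Some c).
Proof.
case: u' => [f m|f m|f m|l] //= -[<-]; split; first by move=> ->.
all: by case: u => [f' m'|f' m'|f' m'|l'] //= eq_data; injection eq_data => *; subst; try lia.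
Qed.

Variables (fstop fajmp ffocus fmethod fpos fneg : Field).
Hypothesis fields_uniq : uniq [:: fstop; fajmp; ffocus; fmethod; fpos; fneg].

Local Notation rho := (rho fstop fajmp ffocus fmethod fpos fneg sj).

Lemma field_eqF :
  (((fstop == fajmp) = false) * ((fstop == ffocus) = false) * ((fstop == fmethod) = false) *
   ((fstop == fpos) = false) * ((fstop == fneg) = false) * ((fajmp == fstop) = false) *
   ((fajmp == ffocus) = false) * ((fajmp == fmethod) = false) * ((fajmp == fpos) = false) *
   ((fajmp == fneg) = false) * ((ffocus == fstop) = false) * ((ffocus == fajmp) = false) *
   ((ffocus == fmethod) = false) * ((ffocus == fpos) = false) * ((ffocus == fneg) = false) *
   ((fmethod == fstop) = false) * ((fmethod == fajmp) = false) * ((fmethod == ffocus) = false) *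
   ((fmethod == fpos) = false) * ((fmethod == fneg) = false) * ((fpos == fstop) = false) *
   ((fpos == fajmp) = false) * ((fpos == ffocus) = false) * ((fpos == fmethod) = false) *
   ((fpos == fneg) = false) * ((fneg == fstop) = false) * ((fneg == fajmp) = false) *
   ((fneg == ffocus) = false) * ((fneg == fmethod) = false) * ((fneg == fpos) = false))%type.
Proof.
by do !split; apply/eqP => eq_f; move: fields_uniq; rewrite eq_f /= !inE !eqxx /= ?orbT ?andbF.
Qed.

Definition test_fields (sig : Spot -> option PAtom) (f m : Spot) (p q : nat) (w : Field) :=
  if w == fneg then Some (sig (sj q)) else if w == fpos then Some (sig (sj p))
  else if w == fmethod then Some (sig m) else if w == ffocus then Some (sig f) else None.

Definition jump_fields (sig : Spot -> option PAtom) (k l : nat) (w : Field) :=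
  if 1 <= l <= k then (if w == fajmp then Some (sig (sj l)) else None)
  else (if w == fstop then Some None else None).

Definition encoded_fields sig (k j : nat) (u : instr Spot) : Field -> option (option PAtom) :=
  match u with
  | Basic f m => test_fields sig f m j.+1 j.+1
  | PTest f m => test_fields sig f m j.+1 j.+2
  | NTest f m => test_fields sig f m j.+2 j.+1
  | AJmp l => jump_fields sig k l
  end.

Lemma writes_rho k j u : all (writes_in (pred1 (sj j))) (rho k j u).
Proof.
case: u => [f m|f m|f m|l] /=; rewrite /writes_in /= ?eqxx //.
by case: ifP => _ /=; rewrite /writes_in /= eqxx.
Qed.

Lemma writes_rhos k (I : seq nat) (g : nat -> instr Spot) :
  all (writes_in (mem [seq sj i | i <- I])) (flatten [seq rho k i (g i) | i <- I]).
Proof.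
elim: I => //= i I IH; rewrite all_cat; apply/andP; split.
  by apply: sub_all (writes_rho k i (g i)); apply: sub_writes_in => x /eqP ->; exact: mem_head.
by apply: sub_all IH; apply: sub_writes_in => x xI; exact: mem_behead.
Qed.

(* Otherwise [/=] would unfold [eff] through the whole sequence [rho k j u]. *)
Local Arguments eff : simpl never.

Lemma exec_rho sig ad al k j u a w :
    sig (sj j) = Some a -> a \in ad -> (forall w, al a w = None) ->
  alpha (exec (State sig ad al) (rho k j u)) a w = encoded_fields sig k j u w.
Proof.
move=> ja aad blank_a.
have addE v al' := @eff_addfield_new sig ad al' (sj j) v a ja.
have setE v y al' := @eff_setfield_old sig ad al' (sj j) v y a ja aad.
case: u => [f m|f m|f m|l]; rewrite /= /rho_body /jump_fields; last first.
  by case: ifP => _; rewrite /exec /= addE ?blank_a //= ?setE /= ?eqxx //=; case: (w == _).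
all: rewrite /exec /= addE ?blank_a //.
all: do 3 (rewrite addE; last by rewrite /= eqxx ?field_eqF /= blank_a).
all: do 4 (rewrite setE; last by rewrite /= !eqxx ?field_eqF /=).
all: rewrite /= eqxx /test_fields /=.
all: by case: (w == fneg); case: (w == fpos); case: (w == fmethod); case: (w == ffocus).
Qed.

Lemma exec_rho_framed L t (X1 X2 : seq Spot) pre post k j u a w :
    allocated L t -> blank t -> sj j \in L -> sigma t (sj j) = Some a ->
    all (writes_in (mem X1)) pre -> sj j \notin X1 ->
    all (writes_in (mem X2)) post -> sj j \notin X2 ->
  alpha (exec t (pre ++ rho k j u ++ post)) a w = encoded_fields (sigma t) k j u w.
Proof.
move=> alloc blk jL ja wpre jX1 wpost jX2.
have [sig1 adom1] := exec_writes_sigma_adom t (all_writes_inT wpre).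
have alloc1 := allocated_exec_writes (all_writes_inT wpre) alloc.
have alloc2 := allocated_exec_writes (all_writes_inT (writes_rho k j u)) alloc1.
have blank1 w' : alpha (exec t pre) a w' = None.
  by rewrite (exec_writes_frame_allocated _ alloc jL ja jX1 wpre).
rewrite !exec_cat (exec_writes_frame_allocated _ alloc2 jL _ jX2 wpost); last first.
  by rewrite (exec_writes_sigma_adom _ (all_writes_inT (writes_rho k j u))).1 sig1.
rewrite -sig1; move: (exec t pre) sig1 adom1 blank1 => [sig ad al] /= sig1 adom1 blank1.
apply: exec_rho blank1; first by rewrite sig1.
by case: alloc => /(_ _ jL); rewrite ja adom1 => -[_ [<-]].
Qed.

Lemma run_pgldmdE P s :
  run proatom proinv (pgldmd fstop fajmp ffocus fmethod fpos fneg s sj P) =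
  E (Setspot s (sj 1))
    (exec (exec (t_init Spot Field PAtom) [seq Create x | x <- pgld_spots P])
       (flatten [seq rho (size P) i (nth (AJmp 0) P i.-1) | i <- iota 1 (size P)] ++
        [:: Addfield (sj (size P).+1) fstop; Addfield (sj (size P).+2) fstop])).
Proof.
rewrite /run -/(exec _ _) /pgldmd; set E1 := E _ _; rewrite -[E1]/(exec _ [:: _]) /E1.
rewrite -!exec_cat /pgld_spots !map_cat -!catA (zip_iota (AJmp 0)) -!map_comp.
by congr (exec _ (_ ++ _ ++ _ ++ flatten _ ++ _)); apply/eq_map => i; rewrite /= subn1.
Qed.

Lemma pgldmd_layout P s : uniq (pgld_spots P) ->
  exists2 t, run proatom proinv (pgldmd fstop fajmp ffocus fmethod fpos fneg s sj P)
             = E (Setspot s (sj 1)) t &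
  allocated (pgld_spots P) t /\
  forall j, 0 < j <= size P -> exists a,
    [/\ sigma t (sj j) = Some a, a \in adom t &
        alpha t a =1 encoded_fields (sigma t) (size P) j (nth (AJmp 0) P j.-1)].
Proof.
move=> uniqL; rewrite run_pgldmdE; set k := size P; set L := pgld_spots P.
pose rhos I := flatten [seq rho k i (nth (AJmp 0) P i.-1) | i <- I].
pose tail := [:: Addfield (sj k.+1) fstop; Addfield (sj k.+2) fstop].
set t0 := exec _ [seq Create x | x <- L].
have [alloc0 blank0] : allocated L t0 /\ blank t0.
  by have := @allocated_creates L [::] (t_init Spot Field PAtom); rewrite cats0; apply.
exists (exec t0 (rhos (iota 1 k) ++ tail)) => //.
have wrhos I : all (writes_in (mem [seq sj i | i <- I])) (rhos I) by apply: writes_rhos.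
have wtail : all (writes_in (mem [seq sj i | i <- [:: k.+1; k.+2]])) tail.
  by rewrite /= /writes_in /= !inE !eqxx ?orbT.
have wall : all (writes_in predT) (rhos (iota 1 k) ++ tail).
  by rewrite all_cat (all_writes_inT (wrhos _)) (all_writes_inT wtail).
have [sig_t adom_t] := exec_writes_sigma_adom t0 wall.
split=> [|j jk]; first exact: allocated_exec_writes.
have jL : sj j \in L by apply: sj_in_pgld_spots; lia.
have [a ja aad] : exists2 a, sigma t0 (sj j) = Some a & a \in adom t0 by case: alloc0 => /(_ _ jL).
exists a; rewrite sig_t adom_t; split=> // w.
have := uniqL; rewrite /L /pgld_spots !cat_uniq => /and3P[_ _ /and3P[_ _]].
rewrite iotaD add1n (iota_split_at jk) -catA !map_cat cat_uniq /=.
case/and4P=> _; rewrite negb_or => /andP[jpre _] jpost _.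
rewrite /rhos map_cat flatten_cat /= -!catA.
apply: (exec_rho_framed _ _ _ alloc0 blank0 jL ja (wrhos _) jpre _ jpost).
rewrite all_cat; apply/andP; split; [apply: sub_all (wrhos _)|apply: sub_all wtail];
  by apply: sub_writes_in => x xX; rewrite -[mem _ x]/(x \in _) mem_cat; apply/orP; auto.
Qed.

Section Decoding.
Variables (sig : Spot -> option PAtom) (L : seq Spot) (k : nat).
Hypothesis sig_inj : {in L, forall x y, sig x = sig y -> x = y}.
Hypothesis sj_L : forall i, 0 < i <= k + 2 -> sj i \in L.
Hypothesis sj_inj : forall i i', 0 < i <= k + 2 -> 0 < i' <= k + 2 -> sj i = sj i' -> i = i'.

Lemma encoded_test_iff j u f m p q :
    j <= k -> 0 < p <= k + 2 -> 0 < q <= k + 2 ->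
    (forall x, focus_of u = Some x -> x \in L) -> (forall x, meth_of u = Some x -> x \in L) ->
  let F := encoded_fields sig k j u in
  [/\ F ffocus = Some (sig f), F fmethod = Some (sig m),
      F fpos = Some (sig (sj p)) & F fneg = Some (sig (sj q))]
  <-> test_data j u = Some (f, m, p, q).
Proof.
move=> jk pk qk uF uM /=.
suff test_iff f' m' p' q' : f' \in L -> m' \in L -> 0 < p' <= k + 2 -> 0 < q' <= k + 2 ->
    [/\ test_fields sig f' m' p' q' ffocus = Some (sig f),
        test_fields sig f' m' p' q' fmethod = Some (sig m),
        test_fields sig f' m' p' q' fpos = Some (sig (sj p)) &
        test_fields sig f' m' p' q' fneg = Some (sig (sj q))]
    <-> Some (f', m', p', q') = Some (f, m, p, q).
  case: u uF uM => [f' m'|f' m'|f' m'|l] /= uF uM.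
  1-3: by apply: test_iff; [exact: uF | exact: uM | lia | lia].
  by rewrite /jump_fields; case: ifP; rewrite ?field_eqF; split=> // -[].
move=> f'L m'L p'k q'k; rewrite /test_fields ?field_eqF ?eqxx.
split=> [[[/(sig_inj f'L) <-] [/(sig_inj m'L) <-]]|[<- <- <- <-]] //.
by move=> [/(sig_inj (sj_L p'k))/(sj_inj p'k pk) <-] [/(sig_inj (sj_L q'k))/(sj_inj q'k qk) <-].
Qed.

Lemma encoded_jump_iff j u l : 0 < l <= k ->
  u = AJmp l <-> encoded_fields sig k j u fajmp = Some (sig (sj l)).
Proof.
move=> lk; case: u => [f m|f m|f m|l'] /=; rewrite /test_fields ?/jump_fields ?field_eqF //.
case: ifP => l'k; rewrite ?eqxx ?field_eqF; split=> [[el]|] //.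
- by rewrite el.
- have [l'k2 lk2] : 0 < l' <= k + 2 /\ 0 < l <= k + 2 by lia.
  by move=> [/(sig_inj (sj_L l'k2))/(sj_inj l'k2 lk2) ->].
- by rewrite el lk in l'k.
Qed.

Lemma encoded_stop_iff j u :
  (exists l, ~~ (0 < l <= k) /\ u = AJmp l) <-> encoded_fields sig k j u fstop != None.
Proof.
case: u => [f m|f m|f m|l] /=; rewrite /test_fields ?/jump_fields ?field_eqF //.
1-3: by split=> // -[? []].
case: ifP => lk; rewrite ?field_eqF ?eqxx; split=> //.
- by case=> l' [+ [el]]; rewrite -el lk.
- by exists l; rewrite lk.
Qed.

Lemma encoded_fieldsP j u (F : Field -> option (option PAtom)) : j <= k ->
    (forall x, focus_of u = Some x -> x \in L) -> (forall x, meth_of u = Some x -> x \in L) ->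
    F =1 encoded_fields sig k j u ->
  let test_fields_are p q f m :=
    [/\ F ffocus = Some (sig f), F fmethod = Some (sig m),
        F fpos = Some (sig (sj p)) & F fneg = Some (sig (sj q))] in
  [/\ forall f m, u = Basic f m <-> test_fields_are j.+1 j.+1 f m,
      forall f m, u = PTest f m <-> test_fields_are j.+1 j.+2 f m,
      forall f m, u = NTest f m <-> test_fields_are j.+2 j.+1 f m,
      forall l, 0 < l <= k -> (u = AJmp l <-> F fajmp = Some (sig (sj l))) &
      (exists l, ~~ (0 < l <= k) /\ u = AJmp l) <-> F fstop != None].
Proof.
move=> jk uF uM FE test_fields_are.
have [j1k j2k] : 0 < j.+1 <= k + 2 /\ 0 < j.+2 <= k + 2 by lia.
have test_iff u' f m p q : test_data j u' = Some (f, m, p, q) -> 0 < p <= k + 2 -> 0 < q <= k + 2 ->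
    u = u' <-> test_fields_are p q f m.
  move=> u'E pk qk; rewrite /test_fields_are !FE.
  exact: iff_trans (test_dataK u u'E) (iff_sym (encoded_test_iff f m jk pk qk uF uM)).
split=> [f m|f m|f m|l lk|]; [exact: test_iff|exact: test_iff|exact: test_iff| |]; rewrite FE.
- exact: encoded_jump_iff.
- exact: encoded_stop_iff.
Qed.

End Decoding.

End Representation.

End Machine.

Theorem proposition1
  (Spot Field : finType) (PAtom : eqType)
  (proatom : nat -> PAtom) (proinv : PAtom -> nat)
  (Hpro1 : forall n, 0 < n -> proinv (proatom n) = n)
  (Hpro2 : forall a, proatom (proinv a) = a)
  (Hpro3 : forall a, 0 < proinv a)
  (Foci Meth : {set Spot}) (HFM : [disjoint Foci & Meth])
  (stop ajmp focus method pos neg : Field)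
  (Hfields : uniq [:: stop; ajmp; focus; method; pos; neg])
  (P : seq (instr Spot))
  (Hk : 0 < size P)
  (HPfoci : forall f, f \in foci_of P -> f \in Foci)
  (HPmeth : forall m, m \in meths_of P -> m \in Meth)
  (s u v : Spot) (sj : nat -> Spot)
  (Hsuv : uniq [:: s; u; v])
  (Hsj_inj : forall i i', 1 <= i <= size P + 2 -> 1 <= i' <= size P + 2 ->
                sj i = sj i' -> i = i')
  (Hsj_suv : forall i, 1 <= i <= size P + 2 -> sj i \notin [:: s; u; v])
  (Hspots : forall x, x \in s :: u :: v :: [seq sj i | i <- iota 1 (size P + 2)] ->
                x \notin Foci :|: Meth) :
  let k := size P in
  let t := run proatom proinv (pgldmd stop ajmp focus method pos neg s sj P) in
  let Y := @yld Spot Field PAtom in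
  let E := @eff Spot Field PAtom proatom proinv in
  Y (Equal s (sj 1)) t /\
  forall (j l : nat) (f m : Spot),
    1 <= j <= k -> 1 <= l <= k -> f \in Foci -> m \in Meth ->
    let uj := nth (AJmp 0) P j.-1 in
    let c8 (p q : nat) :=
      Y (Getfield u (sj j) focus) t /\
      Y (Equal u f) (E (Getfield u (sj j) focus) t) /\
      Y (Getfield v (sj j) method) t /\
      Y (Equal v m) (E (Getfield v (sj j) method) t) /\
      Y (Getfield s (sj j) pos) t /\
      Y (Equal s (sj p)) (E (Getfield s (sj j) pos) t) /\
      Y (Getfield s (sj j) neg) t /\
      Y (Equal s (sj q)) (E (Getfield s (sj j) neg) t) in
    [/\ (uj = Basic f m <-> c8 j.+1 j.+1),
        (uj = PTest f m <-> c8 j.+1 j.+2),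
        (uj = NTest f m <-> c8 j.+2 j.+1),
        (uj = AJmp l <->
           Y (Getfield s (sj j) ajmp) t /\
           Y (Equal s (sj l)) (E (Getfield s (sj j) ajmp) t)) &
        ((exists l', ~~ (1 <= l' <= k) /\ uj = AJmp l') <->
           Y (Hasfield (sj j) stop) t)].
Proof.
move=> k.
have sj_FM : {in [seq sj i | i <- iota 1 (k + 2)], forall x, x \notin Foci :|: Meth}.
  by move=> x x_sj; apply: Hspots; rewrite !inE x_sj !orbT.
have [t' -> [alloc fields]] :=
  pgldmd_layout Hpro1 Hfields s (uniq_pgld_spots HFM HPfoci HPmeth Hsj_inj sj_FM).
move=> t Y E; split; first by rewrite /Y /= /upd_sigma eqxx; case: ifP.
move=> j l f m jk lk fF mM uj c8.
have [jP jk' jk2 j1k j2k] :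
    [/\ j.-1 < k, j <= k, 0 < j <= k + 2, 0 < j.+1 <= k + 2 & 0 < j.+2 <= k + 2].
  by clear -jk; split; lia.
have [a [ja aad fieldsj]] := fields j jk.
have [decB decP decN decJ decS] := encoded_fieldsP Hfields (allocated_inj alloc)
  (@sj_in_pgld_spots _ sj P) Hsj_inj jk' (fun x => focus_in_pgld_spots sj jP)
  (fun x => meth_in_pgld_spots sj jP) fieldsj.
have s_sj i : 0 < i <= k + 2 -> s != sj i.
  by move=> /Hsj_suv; rewrite !inE negb_or eq_sym => /andP[].
have out_FM x y : x \in [:: s; u; v] -> y \in Foci :|: Meth -> x != y.
  move=> xsuv; apply: contraTneq => <-; apply: Hspots.
  by move: xsuv; rewrite !inE => /or3P[] ->; rewrite ?orbT.
have read x y w : x != y -> s != y ->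
    Y (Getfield x (sj j) w) t /\ Y (Equal x y) (E (Getfield x (sj j) w) t) <->
    alpha t' a w = Some (sigma t' y).
  by move=> xy sy; apply: getfield_equal_setspot_iff (s_sj j jk2) sy xy ja aad.
have c8E p q : 0 < p <= k + 2 -> 0 < q <= k + 2 -> c8 p q <->
    [/\ alpha t' a focus = Some (sigma t' f), alpha t' a method = Some (sigma t' m),
        alpha t' a pos = Some (sigma t' (sj p)) & alpha t' a neg = Some (sigma t' (sj q))].
  move=> pk qk; apply: and_pairs_iff; apply: read; rewrite ?s_sj //.
  1-4: by apply: out_FM; rewrite !inE ?fF ?mM ?eqxx ?orbT.
split.
- exact: iff_trans (decB f m) (iff_sym (c8E _ _ j1k j1k)).
- exact: iff_trans (decP f m) (iff_sym (c8E _ _ j1k j2k)).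
- exact: iff_trans (decN f m) (iff_sym (c8E _ _ j2k j1k)).
- have lk2 : 0 < l <= k + 2 by clear -lk; lia.
  exact: iff_trans (decJ l lk) (iff_sym (read _ _ _ (s_sj l lk2) (s_sj l lk2))).
- by rewrite /Y (hasfield_setspotE proatom proinv _ _ (s_sj j jk2) ja aad).
Qed.
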